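(* If a quasi-discrete closure model $\mathcal{M}=((X,\mathcal{C}_R),\mathcal{V})$ is finitely closed and finitely backward closed, then for all $x_1,x_2\in X$, $x_1\equiv_{SLCS}x_2$ implies $x_1\simeq x_2$.
   Context: Quasi-discrete closure model: $\mathcal{C}_R(A)=A\cup\{x\mid\exists a\in A.\ aRx\}$, $\vec{\mathcal{C}}(x)=\mathcal{C}_R(\{x\})$, $\overleftarrow{\mathcal{C}}(x)=\mathcal{C}_{R^{-1}}(\{x\})$, $\mathcal{V}:AP\to\mathcal{P}(X)$, $\mathcal{V}^{-1}(x)=\{p\mid x\in\mathcal{V}(p)\}$; finitely (backward) closed: all $\vec{\mathcal{C}}(x)$ (resp. $\overleftarrow{\mathcal{C}}(x)$) finite. A function $f$ between closure spaces $(X_1,\mathcal{C}_1),(X_2,\mathcal{C}_2)$ is continuous if $f[\mathcal{C}_1(A)]\subseteq\mathcal{C}_2(f[A])$ for all $A$. A path is a continuous function $\pi:(\mathbb{N},\mathcal{C}_{succ})\to(X,\mathcal{C}_R)$, where $\mathcal{C}_{succ}$ is the closure based on the successor relation $\{(n,n+1)\}$. SLCS formulas: $\Phi::=p\mid\neg\Phi\mid\Phi\lor\Phi\mid\vec\rho\,\Phi_1[\Phi_2]\mid\overleftarrow\rho\,\Phi_1[\Phi_2]$ with $p\in AP$. Semantics: $x\models p$ iff $x\in\mathcal{V}(p)$; Boolean cases standard; $x\models\vec\rho\,\Phi_1[\Phi_2]$ iff there are a path $\pi$ and $\ell\in\mathbb{N}$ with $\pi(0)=x$, $\pi(\ell)\models\Phi_1$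 and $\pi(j)\models\Phi_2$ for all $0<j<\ell$; $x\models\overleftarrow\rho\,\Phi_1[\Phi_2]$ iff there are a path $\pi$ and $\ell$ with $\pi(\ell)=x$, $\pi(0)\models\Phi_1$ and $\pi(j)\models\Phi_2$ for all $0<j<\ell$. $x_1\equiv_{SLCS}x_2$ iff they satisfy the same SLCS formulas. Class-based bisimilarity $\simeq$: union of all non-empty equivalence relations $B$ such that $(x_1,x_2)\in B$ implies $\mathcal{V}^{-1}(x_1)=\mathcal{V}^{-1}(x_2)$ and for all $C\in X/B$, $\vec{\mathcal{C}}(x_1)\cap C\neq\emptyset\iff\vec{\mathcal{C}}(x_2)\cap C\neq\emptyset$ and $\overleftarrow{\mathcal{C}}(x_1)\cap C\neq\emptyset\iff\overleftarrow{\mathcal{C}}(x_2)\cap C\neq\emptyset$. *)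

From Stdlib Require Import List Arith.
Set Implicit Arguments.

Definition closureR (T : Type) (R : T -> T -> Prop) (A : T -> Prop) : T -> Prop :=
  fun x => A x \/ exists a, A a /\ R a x.

Definition image (T U : Type) (f : T -> U) (A : T -> Prop) : U -> Prop :=
  fun y => exists x, A x /\ f x = y.

Definition continuous (T U : Type) (C1 : (T -> Prop) -> T -> Prop)
  (C2 : (U -> Prop) -> U -> Prop) (f : T -> U) : Prop :=
  forall A : T -> Prop, forall y, image f (C1 A) y -> C2 (image f A) y.

Definition succ_rel (n m : nat) : Prop := m = S n.

Definition is_path (X : Type) (R : X -> X -> Prop) (p : nat -> X) : Prop :=
  continuous (closureR succ_rel) (closureR R) p.

Definition fwd (X : Type) (R : X -> X -> Prop) (x : X) : X -> Prop :=
  closureR R (fun y => y = x).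
Definition bwd (X : Type) (R : X -> X -> Prop) (x : X) : X -> Prop :=
  closureR (fun a b => R b a) (fun y => y = x).

Definition finite_set (X : Type) (A : X -> Prop) : Prop :=
  exists l : list X, forall y, A y -> In y l.

Definition finitely_closed (X : Type) (R : X -> X -> Prop) : Prop :=
  forall x, finite_set (fwd R x).
Definition finitely_backward_closed (X : Type) (R : X -> X -> Prop) : Prop :=
  forall x, finite_set (bwd R x).

Inductive slcs (AP : Type) : Type :=
| FAtom : AP -> slcs AP
| FNeg : slcs AP -> slcs AP
| FOr : slcs AP -> slcs AP -> slcs AP
| FRhoF : slcs AP -> slcs AP -> slcs AP
| FRhoB : slcs AP -> slcs AP -> slcs AP.

Fixpoint sat (X AP : Type) (R : X -> X -> Prop) (V : AP -> X -> Prop)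
  (f : slcs AP) (x : X) {struct f} : Prop :=
  match f with
  | FAtom p => V p x
  | FNeg g => ~ sat R V g x
  | FOr g h => sat R V g x \/ sat R V h x
  | FRhoF g h => exists (p : nat -> X) (l : nat), is_path R p /\ p 0 = x /\
      sat R V g (p l) /\ (forall j, 0 < j -> j < l -> sat R V h (p j))
  | FRhoB g h => exists (p : nat -> X) (l : nat), is_path R p /\ p l = x /\
      sat R V g (p 0) /\ (forall j, 0 < j -> j < l -> sat R V h (p j))
  end.

Definition slcs_equiv (X AP : Type) (R : X -> X -> Prop) (V : AP -> X -> Prop)
  (x1 x2 : X) : Prop :=
  forall f : slcs AP, sat R V f x1 <-> sat R V f x2.

Definition equivalence_rel (X : Type) (B : X -> X -> Prop) : Prop :=
  (forall x, B x x) /\ (forall x y, B x y -> B y x) /\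
  (forall x y z, B x y -> B y z -> B x z).

(* Equivalence classes of B are the sets {w | B z w}. *)
Definition class_based_bisim (X AP : Type) (R : X -> X -> Prop) (V : AP -> X -> Prop)
  (B : X -> X -> Prop) : Prop :=
  forall x1 x2, B x1 x2 ->
    (forall p, V p x1 <-> V p x2) /\
    (forall z, (exists w, fwd R x1 w /\ B z w) <-> (exists w, fwd R x2 w /\ B z w)) /\
    (forall z, (exists w, bwd R x1 w /\ B z w) <-> (exists w, bwd R x2 w /\ B z w)).

Definition cb_bisimilar (X AP : Type) (R : X -> X -> Prop) (V : AP -> X -> Prop)
  (x1 x2 : X) : Prop :=
  exists B : X -> X -> Prop, (exists a b, B a b) /\ equivalence_rel B /\
    class_based_bisim R V B /\ B x1 x2.

From Stdlib Require Import List Lia Classical.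
Set Implicit Arguments.

(* We show that logical equivalence [slcs_equiv] is itself a
   non-empty equivalence relation and a class-based bisimulation, so it is
   contained in class-based bisimilarity.
   For the closure clauses we use two ingredients:
   - a "diamond" modality: with a contradictory guard, the surrounded formula
     [ρ F[⊥]] only admits paths of length at most one, so it holds at x iff F
     holds at some point of the forward closure of x; dually [ρ⃖ F[⊥]] quantifies
     over the backward closure;
   - separating formulas: for a point z and a finite list of points, some
     formula holds at z and at no listed point that is inequivalent to z.
   Given x1 ≡ x2 and a neighbour w of x1 equivalent to z, the diamond of the
   formula separating z from the (finite) neighbourhood of x2 holds at x1, hence
   at x2, which yields a neighbour of x2 equivalent to z.  If AP is empty there
   are no formulas at all, every two points are equivalent, and the claim is
   trivial since closures are reflexive. *)

Section SLCS.

Variables (X AP : Type) (R : X -> X -> Prop) (V : AP -> X -> Prop).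

Notation sat := (sat R V).
Notation equiv := (slcs_equiv R V).

Definition FAnd (f g : slcs AP) : slcs AP := FNeg (FOr (FNeg f) (FNeg g)).
Definition FTrue (a : AP) : slcs AP := FOr (FAtom a) (FNeg (FAtom a)).
Definition FFalse (a : AP) : slcs AP := FNeg (FTrue a).

Definition FDiamF (a : AP) (f : slcs AP) : slcs AP := FRhoF f (FFalse a).
Definition FDiamB (a : AP) (f : slcs AP) : slcs AP := FRhoB f (FFalse a).

Lemma sat_and f g x : sat (FAnd f g) x <-> sat f x /\ sat g x.
Proof. simpl; split; [intros H; split; apply NNPP; tauto | tauto]. Qed.

Lemma sat_false a x : ~ sat (FFalse a) x.
Proof. simpl; tauto. Qed.

(* Every formula mentions an atom, so without atoms there are no formulas. *)
Fixpoint some_atom (f : slcs AP) : AP :=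
  match f with
  | FAtom p => p
  | FNeg g | FOr g _ | FRhoF g _ | FRhoB g _ => some_atom g
  end.

Lemma equiv_no_atoms x y : ~ inhabited AP -> equiv x y.
Proof. intros NA f; exfalso; exact (NA (inhabits (some_atom f))). Qed.

Lemma equiv_equivalence : equivalence_rel equiv.
Proof.
  split; [intros x f; tauto|]; split.
  - intros x y E f; symmetry; apply E.
  - intros x y z E1 E2 f; rewrite (E1 f); apply E2.
Qed.

Lemma distinguishing_formula z y :
  ~ equiv z y -> exists g, sat g z /\ ~ sat g y.
Proof.
  intros NE; apply not_all_ex_not in NE as [f Hf].
  destruct (classic (sat f z)) as [Hz | Hz].
  - exists f; tauto.
  - exists (FNeg f); simpl; tauto.
Qed.

Lemma separating_formula (a : AP) z (l : list X) :
  exists F, sat F z /\ forall y, In y l -> sat F y -> equiv z y.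
Proof.
  induction l as [| y l [F [HFz HFl]]].
  - exists (FTrue a); split; [simpl; tauto | intros y []].
  - destruct (classic (equiv z y)) as [E | NE].
    + exists F; split; [exact HFz|].
      intros y' [<- | Hin]; [tauto | apply HFl; exact Hin].
    + destruct (distinguishing_formula NE) as [g [Hgz Hgy]].
      exists (FAnd F g); split; [apply sat_and; tauto|].
      intros y' [<- | Hin] Hs; apply sat_and in Hs as [HF Hg]; [contradiction|].
      apply HFl; assumption.
Qed.

Lemma fwd_bwd a b : fwd R a b -> bwd R b a.
Proof. intros [-> | [c [-> Hr]]]; [left | right; exists b]; auto. Qed.

Lemma bwd_fwd a b : bwd R a b -> fwd R b a.
Proof. intros [-> | [c [-> Hr]]]; [left | right; exists b]; auto. Qed.

Definition step_path (a b : X) (n : nat) : X :=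
  match n with 0 => a | _ => b end.

Lemma step_path_is_path a b : fwd R a b -> is_path R (step_path a b).
Proof.
  intros Hab A y [n [[Hn | [m [Hm ->]]] <-]].
  - left; exists n; auto.
  - destruct m as [| m]; simpl.
    + destruct Hab as [<- | [c [-> Hr]]].
      * left; exists 0; auto.
      * right; exists a; split; [exists 0; auto | exact Hr].
    + left; exists (S m); auto.
Qed.

Lemma path_first_step p : is_path R p -> fwd R (p 0) (p 1).
Proof.
  intros Hp.
  destruct (Hp (fun n => n = 0) (p 1)) as [[n [-> E]] | [b [[n [-> <-]] Hr]]].
  - exists 1; split; [right; exists 0; split; reflexivity | reflexivity].
  - left; auto.
  - right; exists (p 0); auto.
Qed.

Lemma false_guard_short a (p : nat -> X) l :
  (forall j, 0 < j -> j < l -> sat (FFalse a) (p j)) -> l = 0 \/ l = 1.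
Proof.
  intros H; destruct l as [| [| l]]; auto.
  exfalso; apply (@sat_false a (p 1)), H; lia.
Qed.

Lemma sat_diamF a F x : sat (FDiamF a F) x <-> exists w, fwd R x w /\ sat F w.
Proof.
  split.
  - intros [p [l [Hp [H0 [HF Hj]]]]]; subst x.
    destruct (@false_guard_short a p l Hj) as [-> | ->].
    + exists (p 0); split; [left|]; auto.
    + exists (p 1); split; [apply path_first_step|]; auto.
  - intros [w [Hw HF]]; exists (step_path x w), 1.
    repeat split; [apply step_path_is_path; exact Hw | exact HF | intros; lia].
Qed.

Lemma sat_diamB a F x : sat (FDiamB a F) x <-> exists w, bwd R x w /\ sat F w.
Proof.
  split.
  - intros [p [l [Hp [Hl [HF Hj]]]]]; subst x.
    destruct (@false_guard_short a p l Hj) as [-> | ->].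
    + exists (p 0); split; [left|]; auto.
    + exists (p 0); split; [apply fwd_bwd, path_first_step|]; auto.
  - intros [w [Hw HF]]; exists (step_path w x), 1.
    repeat split; [apply step_path_is_path, bwd_fwd; exact Hw | exact HF | intros; lia].
Qed.

Lemma equiv_transfer (N : X -> X -> Prop) (M : AP -> slcs AP -> slcs AP) :
  (forall x, N x x) ->
  (forall a F x, sat (M a F) x <-> exists w, N x w /\ sat F w) ->
  forall x1 x2 w z, equiv x1 x2 -> finite_set (N x2) -> N x1 w -> equiv z w ->
  exists w', N x2 w' /\ equiv z w'.
Proof.
  intros Nrefl HM x1 x2 w z E [l Hl] Hw Ezw.
  destruct (classic (inhabited AP)) as [[a] | NA];
    [| exists x2; split; [apply Nrefl | apply equiv_no_atoms, NA]].
  destruct (separating_formula a z l) as [F [HFz HFl]].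
  assert (Hx1 : sat (M a F) x1) by (apply HM; exists w; split; [| apply Ezw]; auto).
  apply E, HM in Hx1 as [w' [Hw' HFw']].
  exists w'; split; [exact Hw' | apply HFl; auto].
Qed.

Lemma equiv_bisimulation :
  finitely_closed R -> finitely_backward_closed R -> class_based_bisim R V equiv.
Proof.
  intros Hf Hb x1 x2 E.
  assert (E' : equiv x2 x1) by (apply equiv_equivalence; exact E).
  assert (Hfwd := @equiv_transfer (fwd R) FDiamF (fun x => or_introl eq_refl) sat_diamF).
  assert (Hbwd := @equiv_transfer (bwd R) FDiamB (fun x => or_introl eq_refl) sat_diamB).
  split; [intros p; exact (E (FAtom p))|].
  split; intros z; split; intros [w [Hw Ez]]; eauto.
Qed.

End SLCS.

Theorem lemma4 (X AP : Type) (R : X -> X -> Prop) (V : AP -> X -> Prop) :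
  finitely_closed R -> finitely_backward_closed R ->
  forall x1 x2 : X, slcs_equiv R V x1 x2 -> cb_bisimilar R V x1 x2.
Proof.
  intros Hf Hb x1 x2 E.
  exists (slcs_equiv R V).
  split; [exists x1, x2; exact E|].
  split; [apply equiv_equivalence|].
  split; [apply equiv_bisimulation; assumption | exact E].
Qed.
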